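(* Consider one time step $t^n\to t^{n+1}=t^n+\Delta t$ of the fully discrete semi-implicit discontinuous Galerkin scheme described in the context (periodic boundary conditions), starting from $\vec U_h^n=(\rho_h^n,\vec m_h^n,E_h^n)\in M_h^k\times\mathbf X_h^k\times M_h^k$ and producing $\vec U_h^{n+1}=(\rho_h^{n+1},\vec m_h^{n+1},E_h^{n+1})$. Assume that the intermediate DG solution $\vec U_h^{\mathrm P}$ satisfies $\vec U_h^{\mathrm P}(\vec x_q)\in G$ for all $\vec x_q\in S_h$. Then the scheme conserves density, momentum and total energy: $$(\rho_h^{n},1)=(\rho_h^{n+1},1),\qquad (\vec m_h^{n},\vec 1)=(\vec m_h^{n+1},\vec 1),\qquad (E_h^{n},1)=(E_h^{n+1},1).$$
   Context: Setting. The compressible Navier--Stokes system with conserved variables $\vec U=(\rho,\vec m,E)$, velocity $\vec u=\vec m/\rho$, internal energy $e$ with $E=\rho e+\frac{\|\vec m\|^2}{2\rho}$, ideal gas pressure $p=(\gamma-1)\rho e$ ($\gamma>1$), Reynolds number $\mathrm{Re}>0$, heat parameter $\lambda>0$, strain $\varepsilon(\vec u)=\frac12(\nabla\vec u+\nabla\vec u^T)$. The admissible set is $G=\{(\rho,\vec m,E):\rho>0,\ E-\frac{\|\vec m\|^2}{2\rho}>0\}$ and, for a small $\epsilon>0$, $G^\epsilon=\{(\rho,\vec m,E):\rho\ge\epsilon,\ E-\frac{\|\vec m\|^2}{2\rho}\ge\epsilon\}$. The domain $\Omega\subset\mathbb R^2$ is a rectangle with periodic boundary conditions, partitioned uniformly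 into square cells $K$ (set $\mathcal E_h$) of diameter $h$; $\Gamma_h$ denotes the set of all faces (periodic faces treated as interior). For each face $e$ shared by $K_{i^-},K_{i^+}$ ($i^-<i^+$), $\vec n_e$ points from $K_{i^-}$ to $K_{i^+}$, $\{v\}=\frac12(v|_{K_{i^-}}+v|_{K_{i^+}})$, $[v]=v|_{K_{i^-}}-v|_{K_{i^+}}$. For $k\ge1$, $M_h^k$ (resp. $\mathbf X_h^k$) is the space of scalar (resp. $\mathbb R^2$-valued) functions whose restriction to each cell lies in $\mathbb Q^k$ (polynomials of degree $\le k$ in each variable). $(\cdot,\cdot)$ denotes the $L^2(\Omega)$ inner product evaluated cellwise by the tensor-product $(k+1)$-point Gauss quadrature, and $\langle\cdot,\cdot\rangle$ the one evaluated by the tensor-product $(k+1)$-point Gauss--Lobatto quadrature; all volume and face integrals in the forms below are evaluated by Gauss--Lobatto quadrature. $S_h$ is the union over cells $K$ of the Gauss quadrature points used in the hyperbolic step (volume and face points) together with auxiliary points formed by tensor products of $(k+1)$-point Gauss and $L$-point Gauss--Lobatto points ($2L-3\ge k$) in each direction. Zhang--Shu limiter on a cell $K$ with point set $S_K$ (applied when the cell average $\overline{\vec U}_K\in G^\epsilon$): replace $\rho_K$ by $\hat\rho_K=\theta_\rho(\rho_K-\bar\rho_K)+\bar\rho_K$, $\theta_\rho=\min\{1,\frac{\bar\rho_K-\epsilon}{\bar\rho_K-\min_{S_K}\rho_K}\}$, then replace $\hat{\vec U}_K=(\hat\rho_K,\vec m_K,E_K)$ by $\theta_e(\hat{\vec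 U}_K-\overline{\vec U}_K)+\overline{\vec U}_K$ with $\theta_e=\min\{1,\frac{\overline{\rho e}_K-\epsilon}{\overline{\rho e}_K-\min_{S_K}\rho e_K}\}$, where $\overline{\rho e}_K=\bar E_K-\frac{\|\bar{\vec m}_K\|^2}{2\bar\rho_K}$ and $\rho e_K=E_K-\frac{\|\vec m_K\|^2}{2\hat\rho_K}$ pointwise. Hyperbolic step (H) over time $\Delta t/2$ (possibly in several substeps whose sizes sum to $\Delta t/2$): the semi-discrete DG method $\frac{d}{dt}(\vec U_h,\varPsi_h)_K=(\vec F^a(\vec U_h),\nabla\varPsi_h)_K-\int_{\partial K}\widehat{\vec F^a\cdot\vec n_K}\,\varPsi_h$ for all $\varPsi_h\in\mathbb Q^k(K)$, with Euler flux $\vec F^a=(\rho\vec u,\rho\vec u\otimes\vec u+p\mathbf I,(E+p)\vec u)$ and local Lax--Friedrichs flux $\widehat{\vec F^a\cdot\vec n_K}=\frac12(\vec F^a(\vec U^-)+\vec F^a(\vec U^+))\cdot\vec n_K-\frac{\alpha_e}{2}(\vec U^+-\vec U^-)$ ($\alpha_e$ the maximal wave speed on face $e$), discretized in time by the third-order SSP Runge--Kutta method $\vec U^{(1)}=\vec U^n+\tau L(\vec U^n)$, $\vec U^{(2)}=\frac34\vec U^n+\frac14(\vec U^{(1)}+\tau L(\vec U^{(1)}))$, $\vec U^{\text{new}}=\frac13\vec U^n+\frac23(\vec U^{(2)}+\tau L(\vec U^{(2)}))$, with the Zhang--Shu limiter on $S_h$ after each stage. One time step: (1) from $\vec U_h^n$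 compute $\vec U_h^{\mathrm H}$ by step (H). (2) Apply the Zhang--Shu limiter at the Gauss--Lobatto points; compute $(\vec u_h^{\mathrm H},e_h^{\mathrm H})\in\mathbf X_h^k\times M_h^k$ by $\langle\vec m_h^{\mathrm H},\vec\theta_h\rangle=\langle\rho_h^{\mathrm H}\vec u_h^{\mathrm H},\vec\theta_h\rangle$ and $\langle E_h^{\mathrm H},\chi_h\rangle=\langle\rho_h^{\mathrm H}e_h^{\mathrm H},\chi_h\rangle+\langle\frac{\vec m_h^{\mathrm H}}{2\rho_h^{\mathrm H}},\vec m_h^{\mathrm H}\chi_h\rangle$ for all $\vec\theta_h,\chi_h$. (3) With parameters $\vartheta\in(0,1]$, $\sigma\ge0$, $\tilde\sigma>0$, set $\rho_h^{\mathrm P}=\rho_h^{\mathrm H}$, find $\vec u_h^*\in\mathbf X_h^k$ with $\langle\rho_h^{\mathrm P}\vec u_h^*,\vec\theta_h\rangle+\frac{\Delta t}{2\mathrm{Re}}a_\varepsilon(\vec u_h^*,\vec\theta_h)+\frac{\Delta t}{3\mathrm{Re}}a_\lambda(\vec u_h^*,\vec\theta_h)=\langle\rho_h^{\mathrm H}\vec u_h^{\mathrm H},\vec\theta_h\rangle$ for all $\vec\theta_h\in\mathbf X_h^k$, set $\vec u_h^{\mathrm P}=2\vec u_h^*-\vec u_h^{\mathrm H}$; then find $e_h^*\in M_h^k$ with $\langle\rho_h^{\mathrm P}e_h^*,\chi_h\rangle+\frac{\vartheta\Delta t\lambda}{\mathrm{Re}}a_{\mathcal D}(e_h^*,\chi_h)=\langle\rho_h^{\mathrm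 H}e_h^{\mathrm H},\chi_h\rangle+\frac{\vartheta\Delta t}{\mathrm{Re}}b_\varepsilon(\vec u_h^*,\chi_h)+\frac{2\vartheta\Delta t}{3\mathrm{Re}}b_\lambda(\vec u_h^*,\chi_h)$ for all $\chi_h\in M_h^k$, and set $e_h^{\mathrm P}=\frac1\vartheta e_h^*+(1-\frac1\vartheta)e_h^{\mathrm H}$. Here $a_\varepsilon(\vec u,\vec\theta)=2\sum_K\int_K\varepsilon(\vec u):\varepsilon(\vec\theta)-2\sum_{e\in\Gamma_h}\int_e\{\varepsilon(\vec u)\vec n_e\}\cdot[\vec\theta]+2\sum_{e\in\Gamma_h}\int_e\{\varepsilon(\vec\theta)\vec n_e\}\cdot[\vec u]+\frac\sigma h\sum_{e\in\Gamma_h}\int_e[\vec u]\cdot[\vec\theta]$, $a_\lambda(\vec u,\vec\theta)=-\sum_K\int_K(\nabla\!\cdot\!\vec u)(\nabla\!\cdot\!\vec\theta)+\sum_{e\in\Gamma_h}\int_e\{\nabla\!\cdot\!\vec u\}[\vec\theta\cdot\vec n_e]-\sum_{e\in\Gamma_h}\int_e\{\nabla\!\cdot\!\vec\theta\}[\vec u\cdot\vec n_e]$, $a_{\mathcal D}(e,\chi)=\sum_K\int_K\nabla e\cdot\nabla\chi-\sum_{e'\in\Gamma_h}\int_{e'}\{\nabla e\cdot\vec n_{e'}\}[\chi]+\frac{\tilde\sigma}h\sum_{e'\in\Gamma_h}\int_{e'}[e][\chi]$, $b_\varepsilon(\vec u,\chi)=2\sum_K\int_K\varepsilon(\vec u):\varepsilon(\vec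 u)\chi+\frac\sigma h\sum_{e\in\Gamma_h}\int_e[\vec u]\cdot[\vec u]\{\chi\}$, $b_\lambda(\vec u,\chi)=-\sum_K\int_K(\nabla\!\cdot\!\vec u)^2\chi$. (4) Compute $(\vec m_h^{\mathrm P},E_h^{\mathrm P})$ by $\langle\vec m_h^{\mathrm P},\vec\theta_h\rangle=\langle\rho_h^{\mathrm P}\vec u_h^{\mathrm P},\vec\theta_h\rangle$, $\langle E_h^{\mathrm P},\chi_h\rangle=\langle\rho_h^{\mathrm P}e_h^{\mathrm P},\chi_h\rangle+\langle\frac{\vec m_h^{\mathrm P}}{2\rho_h^{\mathrm P}},\vec m_h^{\mathrm P}\chi_h\rangle$; if some cell average lies outside $G^\epsilon$, the total energy on each cell $K_i$ of an index set $T$ is shifted by a constant, $E_i\mapsto E_i-\bar E_i+\bar E_i^*$, where $(\bar E_i^* )_{i\in T}$ minimizes $\sum_{i\in T}|\bar E_i^*-\bar E_i|^2$ subject to $\sum_{i\in T}\bar E_i^*|K_i|=\sum_{i\in T}\bar E_i|K_i|$ and $(\bar\rho_i,\bar{\vec m}_i,\bar E_i^* )\in G^\epsilon$; then the Zhang--Shu limiter is applied on $S_h$; the result is $\vec U_h^{\mathrm P}$. (5) From $\vec U_h^{\mathrm P}$ compute $\vec U_h^{n+1}$ by step (H). All steps are assumed well defined (linear systems uniquely solvable, densities positive where divided by). *)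

(* Algebraic statement over an arbitrary real closed field R
   (the real numbers are an instance). *)
From HB Require Import structures.
From mathcomp Require Import all_boot all_order all_algebra.
Set Implicit Arguments. Unset Strict Implicit. Unset Printing Implicit Defensive.
Import Order.TTheory GRing.Theory Num.Theory.
Local Open Scope ring_scope.

(* Domain: the rectangle [0, Nx*dx] x [0, Ny*dx], periodic, partitioned into *)
(* Nx*Ny square cells K_(i,j) = [i dx,(i+1)dx] x [j dx,(j+1)dx] of side dx.  *)
(* A function of Q^k(K) is stored by its coefficients in the monomial basis  *)
(* xi^a eta^b (0 <= a,b <= k) of the reference coordinates (xi,eta) in       *)
(* [-1,1]^2, x = (i+1/2)dx + xi dx/2, y = (j+1/2)dx + eta dx/2.              *)
(* gx/gw: (k+1)-point Gauss rule on [-1,1]; lx/lw: (k+1)-point Gauss-Lobatto *)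
(* rule; ax/aw: La-point Gauss-Lobatto rule (auxiliary points of S_h).        *)
Record disc (R : rcfType) := Disc {
  kd : nat;          (* polynomial degree k *)
  Nx : nat; Ny : nat; (* number of cells in x and y *)
  dx : R;            (* side length of the square cells *)
  hd : R;            (* the mesh parameter h = diameter of a cell *)
  La : nat;          (* number L of auxiliary Gauss-Lobatto points *)
  gx : 'I_kd.+1 -> R; gw : 'I_kd.+1 -> R;
  lx : 'I_kd.+1 -> R; lw : 'I_kd.+1 -> R;
  ax : 'I_La -> R;    aw : 'I_La -> R }.
Arguments gx {R} d _. Arguments gw {R} d _. Arguments lx {R} d _.
Arguments lw {R} d _. Arguments ax {R} d _. Arguments aw {R} d _.

(* Physical / scheme parameters: gamma, Re, lambda, epsilon, vartheta,
   sigma, tilde sigma. *)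
Record phys (R : rcfType) := Phys {
  gam : R; reyn : R; lamh : R; epsl : R; vth : R; sig : R; sigt : R }.

(* integral of xi^m over [-1,1] *)
Definition mono_int (R : rcfType) (m : nat) : R :=
  if odd m then 0 else 2 / (m.+1)%:R.

(* the n-point Gauss rule: n distinct nodes in (-1,1), exact for degree <= 2n-1
   (this characterises it uniquely) *)
Definition gauss_rule (R : rcfType) (n : nat) (x w : 'I_n -> R) : Prop :=
  injective x /\ (forall i, -1 < x i < 1) /\
  forall m, (m < 2 * n)%N -> \sum_(i < n) w i * x i ^+ m = mono_int R m.

(* the n-point Gauss-Lobatto rule: n distinct nodes in [-1,1] including both
   endpoints, exact for degree <= 2n-3 (characterises it uniquely, n >= 2) *)
Definition gl_rule (R : rcfType) (n : nat) (x w : 'I_n -> R) : Prop :=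
  injective x /\ (forall i, -1 <= x i <= 1) /\
  (exists i, x i = -1) /\ (exists i, x i = 1) /\
  forall m, (m <= 2 * n - 3)%N -> \sum_(i < n) w i * x i ^+ m = mono_int R m.

Definition c0 : 'I_4 := @Ordinal 4 0 isT.  (* density rho *)
Definition c1 : 'I_4 := @Ordinal 4 1 isT.  (* momentum m_1 *)
Definition c2 : 'I_4 := @Ordinal 4 2 isT.  (* momentum m_2 *)
Definition c3 : 'I_4 := @Ordinal 4 3 isT.  (* total energy E *)

Section Scheme.
Context (R : rcfType) (D : disc R) (P : phys R).

Local Notation k := (kd D).
Local Notation cell := ('I_(Nx D) * 'I_(Ny D))%type.

Definition Qk := 'I_k.+1 -> 'I_k.+1 -> R.
(* a scalar DG function in M_h^k *)
Definition SF := 'I_(Nx D) -> 'I_(Ny D) -> Qk.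
(* a vector DG function in X_h^k *)
Definition VF := (SF * SF)%type.
(* a DG state U_h = (rho, m_1, m_2, E) in M_h^k x X_h^k x M_h^k *)
Definition State := 'I_4 -> SF.

Definition evalQ (q : Qk) (xi eta : R) : R :=
  \sum_(a < k.+1) \sum_(b < k.+1) q a b * xi ^+ a * eta ^+ b.
Definition dxiQ (q : Qk) (xi eta : R) : R :=
  \sum_(a < k.+1) \sum_(b < k.+1) q a b * (a : nat)%:R * xi ^+ a.-1 * eta ^+ b.
Definition detaQ (q : Qk) (xi eta : R) : R :=
  \sum_(a < k.+1) \sum_(b < k.+1) q a b * (b : nat)%:R * xi ^+ a * eta ^+ b.-1.

Definition cstQ (v : R) : Qk := fun a b => if (a == ord0) && (b == ord0) then v else 0.
Definition shiftQ (th : R) (q : Qk) (v : R) : Qk :=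
  fun a b => th * q a b + cstQ ((1 - th) * v) a b.

Definition oneF : SF := fun _ _ => cstQ 1.

Definition combF (al : R) (f : SF) (be : R) (g : SF) : SF :=
  fun i j a b => al * f i j a b + be * g i j a b.
Definition combS (al : R) (U : State) (be : R) (V : State) : State :=
  fun c => combF al (U c) be (V c).

(* a point of a cell given in reference coordinates *)
Record pt := Pt { pi : 'I_(Nx D); pj : 'I_(Ny D); px : R; py : R }.
Definition evp (f : SF) (p : pt) : R := evalQ (f (pi p) (pj p)) (px p) (py p).
(* physical derivatives d/dx, d/dy *)
Definition dXp (f : SF) (p : pt) : R := 2 / dx D * dxiQ (f (pi p) (pj p)) (px p) (py p).
Definition dYp (f : SF) (p : pt) : R := 2 / dx D * detaQ (f (pi p) (pj p)) (px p) (py p).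
Definition Uval (U : State) (p : pt) : 'I_4 -> R := fun c => evp (U c) p.

Definition volG (Phi : pt -> R) : R :=
  \sum_(i < Nx D) \sum_(j < Ny D) \sum_(a < k.+1) \sum_(b < k.+1)
     gw D a * gw D b * (dx D / 2) ^+ 2 * Phi (Pt i j (gx D a) (gx D b)).
Definition volGL (Phi : pt -> R) : R :=
  \sum_(i < Nx D) \sum_(j < Ny D) \sum_(a < k.+1) \sum_(b < k.+1)
     lw D a * lw D b * (dx D / 2) ^+ 2 * Phi (Pt i j (lx D a) (lx D b)).

(* (f, g) : L^2 inner product by Gauss quadrature *)
Definition ipG (f g : SF) : R := volG (fun p => evp f p * evp g p).
(* <f, g> : L^2 inner product by Gauss-Lobatto quadrature *)
Definition ipGL (f g : SF) : R := volGL (fun p => evp f p * evp g p).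
Definition ipGL3 (r f g : SF) : R := volGL (fun p => evp r p * evp f p * evp g p).
Definition vipGL (u th : VF) : R := ipGL u.1 th.1 + ipGL u.2 th.2.
Definition vipGL3 (r : SF) (u th : VF) : R := ipGL3 r u.1 th.1 + ipGL3 r u.2 th.2.
Definition kinGL (r : SF) (m : VF) (chi : SF) : R :=
  volGL (fun p => evp m.1 p / (2 * evp r p) * (evp m.1 p * evp chi p)
                + evp m.2 p / (2 * evp r p) * (evp m.2 p * evp chi p)).

(* The integrand
   Phi n1 n2 pm pp receives the normal n_e = (n1,n2) and the traces points
   pm (in K^-) and pp (in K^+).  Each face is listed once: the vertical face
   between K_(i,j) and K_(i+1 mod Nx, j) with n_e = (1,0), and the horizontal
   face between K_(i,j) and K_(i, j+1 mod Ny) with n_e = (0,1). *)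
Definition facesGL (Phi : R -> R -> pt -> pt -> R) : R :=
  \sum_(i < Nx D) \sum_(j < Ny D) \sum_(b < k.+1) lw D b * (dx D / 2) *
    (Phi 1 0 (Pt i j 1 (lx D b)) (Pt (ordS i) j (-1) (lx D b)) +
     Phi 0 1 (Pt i j (lx D b) 1) (Pt i (ordS j) (lx D b) (-1))).

Definition dot2 (a b : R * R) : R := a.1 * b.1 + a.2 * b.2.
Definition avgf (g : pt -> R) (pm pp : pt) : R := (g pm + g pp) / 2.
Definition jump (g : pt -> R) (pm pp : pt) : R := g pm - g pp.
Definition avgv (g : pt -> R * R) (pm pp : pt) : R * R :=
  (((g pm).1 + (g pp).1) / 2, ((g pm).2 + (g pp).2) / 2).
Definition vjump (u : VF) (pm pp : pt) : R * R :=
  (jump (evp u.1) pm pp, jump (evp u.2) pm pp).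

(* strain eps(u) = (grad u + grad u^T)/2 *)
Definition e11 (u : VF) (p : pt) : R := dXp u.1 p.
Definition e22 (u : VF) (p : pt) : R := dYp u.2 p.
Definition e12 (u : VF) (p : pt) : R := (dYp u.1 p + dXp u.2 p) / 2.
Definition epsdot (u v : VF) (p : pt) : R :=
  e11 u p * e11 v p + e22 u p * e22 v p + 2 * (e12 u p * e12 v p).
Definition epsn (u : VF) (n1 n2 : R) (p : pt) : R * R :=
  (e11 u p * n1 + e12 u p * n2, e12 u p * n1 + e22 u p * n2).
Definition divu (u : VF) (p : pt) : R := dXp u.1 p + dYp u.2 p.
Definition dotn (u : VF) (n1 n2 : R) (p : pt) : R := evp u.1 p * n1 + evp u.2 p * n2.

Definition a_eps (u th : VF) : R :=
  2 * volGL (epsdot u th)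
  - 2 * facesGL (fun n1 n2 pm pp => dot2 (avgv (epsn u n1 n2) pm pp) (vjump th pm pp))
  + 2 * facesGL (fun n1 n2 pm pp => dot2 (avgv (epsn th n1 n2) pm pp) (vjump u pm pp))
  + sig P / hd D * facesGL (fun _ _ pm pp => dot2 (vjump u pm pp) (vjump th pm pp)).

Definition a_lam (u th : VF) : R :=
  - volGL (fun p => divu u p * divu th p)
  + facesGL (fun n1 n2 pm pp => avgf (divu u) pm pp * jump (dotn th n1 n2) pm pp)
  - facesGL (fun n1 n2 pm pp => avgf (divu th) pm pp * jump (dotn u n1 n2) pm pp).

Definition a_D (e chi : SF) : R :=
  volGL (fun p => dXp e p * dXp chi p + dYp e p * dYp chi p)
  - facesGL (fun n1 n2 pm pp =>
       avgf (fun p => dXp e p * n1 + dYp e p * n2) pm pp * jump (evp chi) pm pp)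
  + sigt P / hd D * facesGL (fun _ _ pm pp => jump (evp e) pm pp * jump (evp chi) pm pp).

Definition b_eps (u : VF) (chi : SF) : R :=
  2 * volGL (fun p => epsdot u u p * evp chi p)
  + sig P / hd D * facesGL (fun _ _ pm pp =>
       dot2 (vjump u pm pp) (vjump u pm pp) * avgf (evp chi) pm pp).

Definition b_lam (u : VF) (chi : SF) : R :=
  - volGL (fun p => divu u p ^+ 2 * evp chi p).

Definition pres (w : 'I_4 -> R) : R :=
  (gam P - 1) * (w c3 - (w c1 ^+ 2 + w c2 ^+ 2) / (2 * w c0)).
Definition fluxn (n1 n2 : R) (w : 'I_4 -> R) : 'I_4 -> R :=
  let mn := w c1 * n1 + w c2 * n2 in
  let un := mn / w c0 in
  fun c => match nat_of_ord c with
           | 0 => mn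
           | 1 => w c1 * un + pres w * n1
           | 2 => w c2 * un + pres w * n2
           | _ => (w c3 + pres w) * un
           end.
(* wave speed |u.n| + c in direction n (|n| = 1) *)
Definition speed (n1 n2 : R) (w : 'I_4 -> R) : R :=
  `|(w c1 * n1 + w c2 * n2) / w c0| + Num.sqrt (gam P * pres w / w c0).
Definition alphaV (U : State) (i : 'I_(Nx D)) (j : 'I_(Ny D)) : R :=
  \big[Num.max/0]_(b < k.+1)
     Num.max (speed 1 0 (Uval U (Pt i j 1 (gx D b))))
             (speed 1 0 (Uval U (Pt (ordS i) j (-1) (gx D b)))).
Definition alphaH (U : State) (i : 'I_(Nx D)) (j : 'I_(Ny D)) : R :=
  \big[Num.max/0]_(b < k.+1)
     Num.max (speed 0 1 (Uval U (Pt i j (gx D b) 1)))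
             (speed 0 1 (Uval U (Pt i (ordS j) (gx D b) (-1)))).
(* local Lax-Friedrichs flux: n = n_K, win = U^- (interior), wout = U^+ *)
Definition llf (n1 n2 al : R) (win wout : 'I_4 -> R) : 'I_4 -> R :=
  fun c => (fluxn n1 n2 win c + fluxn n1 n2 wout c) / 2 - al / 2 * (wout c - win c).

Definition ipK (q psi : Qk) : R :=
  \sum_(a < k.+1) \sum_(b < k.+1) gw D a * gw D b * (dx D / 2) ^+ 2 *
     (evalQ q (gx D a) (gx D b) * evalQ psi (gx D a) (gx D b)).

(* right-hand side of the semi-discrete DG method, component c, cell (i,j),
   test function psi in Q^k(K):
   (F^a(U), grad psi)_K - int_{dK} (F^a.n_K)^ psi  (Gauss quadrature) *)
Definition rhsH (U : State) (c : 'I_4) (i : 'I_(Nx D)) (j : 'I_(Ny D)) (psi : Qk) : R :=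
  \sum_(a < k.+1) \sum_(b < k.+1) gw D a * gw D b * (dx D / 2) ^+ 2 *
     (fluxn 1 0 (Uval U (Pt i j (gx D a) (gx D b))) c
        * (2 / dx D * dxiQ psi (gx D a) (gx D b))
    + fluxn 0 1 (Uval U (Pt i j (gx D a) (gx D b))) c
        * (2 / dx D * detaQ psi (gx D a) (gx D b)))
  - \sum_(b < k.+1) gw D b * (dx D / 2) *
     (llf 1 0 (alphaV U i j) (Uval U (Pt i j 1 (gx D b)))
            (Uval U (Pt (ordS i) j (-1) (gx D b))) c * evalQ psi 1 (gx D b)
    + llf (-1) 0 (alphaV U (ord_pred i) j) (Uval U (Pt i j (-1) (gx D b)))
            (Uval U (Pt (ord_pred i) j 1 (gx D b))) c * evalQ psi (-1) (gx D b)
    + llf 0 1 (alphaH U i j) (Uval U (Pt i j (gx D b) 1))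
            (Uval U (Pt i (ordS j) (gx D b) (-1))) c * evalQ psi (gx D b) 1
    + llf 0 (-1) (alphaH U i (ord_pred j)) (Uval U (Pt i j (gx D b) (-1)))
            (Uval U (Pt i (ord_pred j) (gx D b) 1)) c * evalQ psi (gx D b) (-1)).

(* V = L(U): (V, psi)_K = rhsH U psi for all cells and all psi in Q^k(K) *)
Definition isL (U V : State) : Prop :=
  forall c i j (psi : Qk), ipK (V c i j) psi = rhsH U c i j psi.

Definition inG (w : 'I_4 -> R) : Prop :=
  0 < w c0 /\ 0 < w c3 - (w c1 ^+ 2 + w c2 ^+ 2) / (2 * w c0).
Definition inGeps (w : 'I_4 -> R) : bool :=
  (epsl P <= w c0) && (epsl P <= w c3 - (w c1 ^+ 2 + w c2 ^+ 2) / (2 * w c0)).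

(* cell average (computed exactly, by Gauss quadrature) *)
Definition cavg (q : Qk) : R :=
  (\sum_(a < k.+1) \sum_(b < k.+1) gw D a * gw D b * evalQ q (gx D a) (gx D b)) / 4.
Definition minS (S : seq (R * R)) (f : R -> R -> R) : R :=
  match S with
  | [::] => 0
  | p :: S' => foldr (fun q acc => Num.min (f q.1 q.2) acc) (f p.1 p.2) S'
  end.
(* the limiter on one cell with point set S_K; w = (rho_K, m_K, E_K).
   min{1, (a - eps)/(a - mn)} is read as 1 when the denominator vanishes. *)
Definition zs_cell (S : seq (R * R)) (w : 'I_4 -> Qk) : 'I_4 -> Qk :=
  let wbar := fun c => cavg (w c) in
  if inGeps wbar then
    let rb := wbar c0 in
    let mnr := minS S (evalQ (w c0)) in
    let thr := if mnr < rb then Num.min 1 ((rb - epsl P) / (rb - mnr)) else 1 in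
    let rhat := shiftQ thr (w c0) rb in
    let reb := wbar c3 - (wbar c1 ^+ 2 + wbar c2 ^+ 2) / (2 * rb) in
    let mne := minS S (fun x y => evalQ (w c3) x y
                 - (evalQ (w c1) x y ^+ 2 + evalQ (w c2) x y ^+ 2) / (2 * evalQ rhat x y)) in
    let the := if mne < reb then Num.min 1 ((reb - epsl P) / (reb - mne)) else 1 in
    fun c => shiftQ the (if c == c0 then rhat else w c) (wbar c)
  else w.
Definition limit (S : seq (R * R)) (U : State) : State :=
  fun c i j => zs_cell S (fun c' => U c' i j) c.

Definition ordsK := enum 'I_k.+1.
(* S_K of the hyperbolic step: Gauss volume points, Gauss points on the four
   faces, and the auxiliary Gauss x L-point Gauss-Lobatto tensor points *)
Definition S_H : seq (R * R) :=
  [seq (gx D a, gx D b) | a <- ordsK, b <- ordsK]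
  ++ [seq (1, gx D b) | b <- ordsK] ++ [seq (-1, gx D b) | b <- ordsK]
  ++ [seq (gx D a, 1) | a <- ordsK] ++ [seq (gx D a, -1) | a <- ordsK]
  ++ [seq (gx D a, ax D l) | a <- ordsK, l <- enum 'I_(La D)]
  ++ [seq (ax D l, gx D a) | a <- ordsK, l <- enum 'I_(La D)].
Definition S_GL : seq (R * R) := [seq (lx D a, lx D b) | a <- ordsK, b <- ordsK].

(* one SSP-RK3 step of size tau, limiter on S_h after each stage *)
Definition ssprk (tau : R) (U Unew : State) : Prop :=
  exists L0 L1 L2 U1 U2 : State,
    isL U L0 /\ U1 = limit S_H (combS 1 U tau L0) /\
    isL U1 L1 /\ U2 = limit S_H (combS (3/4) U (1/4) (combS 1 U1 tau L1)) /\
    isL U2 L2 /\ Unew = limit S_H (combS (1/3) U (2/3) (combS 1 U2 tau L2)).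
(* step (H) over time dt/2, in N >= 1 substeps of positive sizes summing to dt/2 *)
Definition Hstep (dt : R) (Uin Uout : State) : Prop :=
  exists (N : nat) (taus : nat -> R) (Us : nat -> State),
    Us 0%N = Uin /\ Us N = Uout /\ (forall s, (s < N)%N -> 0 < taus s) /\
    \sum_(s < N) taus s = dt / 2 /\
    (forall s, (s < N)%N -> ssprk (taus s) (Us s) (Us s.+1)).

Definition shiftE (E : SF) (T : {set cell}) (Es : cell -> R) : SF :=
  fun i j => if (i, j) \in T
             then (fun a b => E i j a b + cstQ (Es (i, j) - cavg (E i j)) a b)
             else E i j.
Definition avgw (r m1 m2 E : SF) (p : cell) : 'I_4 -> R :=
  fun c => match nat_of_ord c with
           | 0 => cavg (r p.1 p.2) | 1 => cavg (m1 p.1 p.2)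
           | 2 => cavg (m2 p.1 p.2) | _ => cavg (E p.1 p.2) end.
Definition avgwE (r m1 m2 : SF) (Eb : R) (p : cell) : 'I_4 -> R :=
  fun c => match nat_of_ord c with
           | 0 => cavg (r p.1 p.2) | 1 => cavg (m1 p.1 p.2)
           | 2 => cavg (m2 p.1 p.2) | _ => Eb end.
Definition efeasible (r m1 m2 E : SF) (T : {set cell}) (Es : cell -> R) : Prop :=
  \sum_(p in T) Es p * dx D ^+ 2 = \sum_(p in T) cavg (E p.1 p.2) * dx D ^+ 2 /\
  (forall p, p \in T -> inGeps (avgwE r m1 m2 (Es p) p)).
Definition efix (r m1 m2 E E' : SF) : Prop :=
  ((forall p : cell, inGeps (avgw r m1 m2 E p)) -> E' = E) /\
  (~ (forall p : cell, inGeps (avgw r m1 m2 E p)) ->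
    exists (T : {set cell}) (Es : cell -> R),
      efeasible r m1 m2 E T Es /\
      (forall Es', efeasible r m1 m2 E T Es' ->
         \sum_(p in T) (Es p - cavg (E p.1 p.2)) ^+ 2
           <= \sum_(p in T) (Es' p - cavg (E p.1 p.2)) ^+ 2) /\
      E' = shiftE E T Es).

Definition mkState (r m1 m2 E : SF) : State :=
  fun c => match nat_of_ord c with 0 => r | 1 => m1 | 2 => m2 | _ => E end.

(* ---- steps (2)-(4): from U^H (output of the first step (H)) to U^P ---- *)
Definition Pstep (dt : R) (UH UP : State) : Prop :=
  exists (UHl : State) (uH ust uP mP : VF) (eH est eP EP0 EP1 : SF),
    (* (2) limiter at the Gauss-Lobatto points, then velocity / internal energy *)
    UHl = limit S_GL UH /\
    (forall th : VF, vipGL (UHl c1, UHl c2) th = vipGL3 (UHl c0) uH th) /\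
    (forall chi : SF, ipGL (UHl c3) chi
        = ipGL3 (UHl c0) eH chi + kinGL (UHl c0) (UHl c1, UHl c2) chi) /\
    (* (3) rho^P = rho^H; implicit velocity and internal energy updates *)
    (forall th : VF, vipGL3 (UHl c0) ust th
        + dt / (2 * reyn P) * a_eps ust th + dt / (3 * reyn P) * a_lam ust th
        = vipGL3 (UHl c0) uH th) /\
    uP = (combF 2 ust.1 (-1) uH.1, combF 2 ust.2 (-1) uH.2) /\
    (forall chi : SF, ipGL3 (UHl c0) est chi
        + vth P * dt * lamh P / reyn P * a_D est chi
        = ipGL3 (UHl c0) eH chi + vth P * dt / reyn P * b_eps ust chi
          + 2 * vth P * dt / (3 * reyn P) * b_lam ust chi) /\
    eP = combF (1 / vth P) est (1 - 1 / vth P) eH /\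
    (* (4) back to conserved variables, energy redistribution, limiter on S_h *)
    (forall th : VF, vipGL mP th = vipGL3 (UHl c0) uP th) /\
    (forall chi : SF, ipGL EP0 chi = ipGL3 (UHl c0) eP chi + kinGL (UHl c0) mP chi) /\
    efix (UHl c0) mP.1 mP.2 EP0 EP1 /\
    UP = limit S_H (mkState (UHl c0) mP.1 mP.2 EP1).

End Scheme.
Arguments oneF {R D}.

(* Every step is tested with the constant function 1.  In step (H) the volume
   terms vanish and, the local Lax-Friedrichs flux being conservative, the face
   terms cancel in pairs over the periodic mesh; the Zhang-Shu limiter keeps all
   cell averages.  In steps (2)-(4) every bilinear form vanishes on constants,
   so u* carries the momentum of u^H, and so does u^P = 2 u* - u^H.  For the
   energy, Gauss-Lobatto quadrature sees m = rho u at its nodes, so the kinetic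
   energy is rho |u|^2 / 2 there; testing the velocity equation with u* and
   using a(u, u) = b(u, 1) shows that the kinetic energy dissipated by
   viscosity is exactly the internal energy gained.  The energy redistribution
   is constrained to keep the total, and for k >= 1 the Gauss-Lobatto and Gauss
   rules agree on Q^k. *)

From mathcomp Require Import all_boot all_order all_algebra ring zify.
Import Order.TTheory GRing.Theory Num.Theory.
Local Open Scope ring_scope.
Set Implicit Arguments. Unset Strict Implicit.

Lemma sum_ordS_cancel (V : zmodType) n (F G : 'I_n -> V) :
  (forall i, G (ordS i) = - F i) -> \sum_(i < n) (F i + G i) = 0.
Proof.
move=> GF; rewrite big_split /= [X in _ + X](reindex_inj (@ordS_inj _)) /=.
by rewrite (eq_bigr _ (fun i _ => GF i)) sumrN subrr.
Qed.

Lemma sum_periodic_faces (R : ringType) n m l (g : 'I_l -> R)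
    (V V' H H' : 'I_n -> 'I_m -> 'I_l -> R) :
  (forall i j b, V' (ordS i) j b = - V i j b) ->
  (forall i j b, H' i (ordS j) b = - H i j b) ->
  \sum_(i < n) \sum_(j < m) \sum_(b < l) g b * (V i j b + V' i j b + H i j b + H' i j b)
  = 0.
Proof.
move=> VV' HH'.
transitivity (\sum_(i < n) \sum_(j < m) \sum_(b < l) g b * (V i j b + V' i j b)
            + \sum_(i < n) \sum_(j < m) \sum_(b < l) g b * (H i j b + H' i j b)).
  rewrite -big_split; apply: eq_bigr => i _; rewrite -big_split; apply: eq_bigr => j _.
  by rewrite -big_split; apply: eq_bigr => b _; rewrite /= -mulrDr !addrA.
rewrite exchange_big big1 ?add0r => [|j _]; last first.
  rewrite exchange_big big1 // => b _.
  by rewrite -mulr_sumr sum_ordS_cancel ?mulr0 // => i; apply: VV'.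
apply: big1 => i _; rewrite exchange_big big1 // => b _.
by rewrite -mulr_sumr sum_ordS_cancel ?mulr0 // => j; apply: HH'.
Qed.

(* Also true at r = 0, where both sides vanish since x / 0 = 0. *)
Lemma kinetic_density_eq (F : numFieldType) (w m r u : F) :
  w * m = w * (r * u) -> w * (m / (2 * r) * m) = w * (r * u * u / 2).
Proof.
have [->|w_neq0] := eqVneq w 0; first by rewrite !mul0r.
move/(mulfI w_neq0) => ->; have [->|r_neq0] := eqVneq r 0; first by rewrite !(mul0r, mulr0, invr0).
by congr (_ * _); field.
Qed.

Section Lagrange.
Variables (F : fieldType) (n : nat) (x : 'I_n -> F).

Definition lagrange_poly (i : 'I_n) : {poly F} :=
  let p := \prod_(j <- [seq j <- enum 'I_n | j != i]) ('X - (x j)%:P) in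
  (p.[x i])^-1 *: p.

Lemma size_lagrange_poly i : (size (lagrange_poly i) <= n)%N.
Proof.
apply: leq_trans (size_scale_leq _ _) _; rewrite size_prod_XsubC size_filter.
have i_out : (0 < count (predC (fun j => j != i)) (enum 'I_n))%N.
  by rewrite -has_count; apply/hasP; exists i; rewrite ?mem_enum //= eqxx.
by move: i_out; have := count_predC (fun j => j != i) (enum 'I_n); rewrite size_enum_ord; lia.
Qed.

Lemma lagrange_poly_sample : injective x ->
  forall i j, (lagrange_poly i).[x j] = (j == i)%:R.
Proof.
move=> xinj i j; rewrite /lagrange_poly hornerZ.
have [->|neq_ji] := eqVneq j i.
  rewrite mulVf ?eqxx // horner_prod prodf_seq_neq0; apply/allP => l.
  by rewrite mem_filter => /andP[neq_li _]; rewrite /= hornerXsubC subr_eq0 (inj_eq xinj) eq_sym.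
rewrite [X in _ * X](_ : _ = 0) ?mulr0 // horner_prod; apply/eqP; rewrite prodf_seq_eq0.
by apply/hasP; exists j; [rewrite mem_filter neq_ji mem_enum | rewrite /= hornerXsubC subrr].
Qed.

End Lagrange.

Section Scheme.
Variables (R : rcfType) (D : disc R) (P : phys R).
Local Notation k := (kd D).
Local Notation Qk := (Qk D).
Local Notation SF := (SF D).
Local Notation VF := (VF D).
Local Notation State := (State D).
Local Notation cstQ := (@cstQ R D).

Lemma sumQ_at0 (G : 'I_k.+1 -> 'I_k.+1 -> R) :
  (forall a b, (a != ord0) || (b != ord0) -> G a b = 0) ->
  \sum_(a < k.+1) \sum_(b < k.+1) G a b = G ord0 ord0.
Proof.
move=> G0; rewrite (big_only1 ord0 (P := xpredT)) //; last first.
  by move=> a na _; apply: big1 => b _; apply: G0; rewrite na.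
by rewrite (big_only1 ord0 (P := xpredT)) // => b nb _; apply: G0; rewrite nb orbT.
Qed.

Lemma evalQ_cstQ v xi eta : evalQ (cstQ v) xi eta = v.
Proof.
rewrite /evalQ sumQ_at0 /cstQ ?eqxx ?mulr1 // => a b.
by rewrite -negb_and => /negbTE->; rewrite !mul0r.
Qed.

Lemma dxiQ_cstQ v xi eta : dxiQ (cstQ v) xi eta = 0.
Proof.
rewrite /dxiQ sumQ_at0 /cstQ ?mulr0 ?mul0r // => a b.
by rewrite -negb_and => /negbTE->; rewrite !mul0r.
Qed.

Lemma detaQ_cstQ v xi eta : detaQ (cstQ v) xi eta = 0.
Proof.
rewrite /detaQ sumQ_at0 /cstQ ?mulr0 ?mul0r // => a b.
by rewrite -negb_and => /negbTE->; rewrite !mul0r.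
Qed.

Lemma tensor_quad_exact (x w : 'I_k.+1 -> R) :
  (forall m, (m <= k)%N -> \sum_(i < k.+1) w i * x i ^+ m = mono_int R m) ->
  forall q : Qk, \sum_(a < k.+1) \sum_(b < k.+1) w a * w b * evalQ q (x a) (x b)
    = \sum_(a < k.+1) \sum_(b < k.+1) q a b * mono_int R a * mono_int R b.
Proof.
move=> exact1 q.
have exact_a (a : 'I_k.+1) : \sum_(i < k.+1) w i * x i ^+ a = mono_int R a.
  by apply: exact1; rewrite -ltnS.
transitivity (\sum_(a' < k.+1) \sum_(b' < k.+1) \sum_(a < k.+1) \sum_(b < k.+1)
                q a' b' * (w a * x a ^+ a') * (w b * x b ^+ b')).
  transitivity (\sum_(a < k.+1) \sum_(b < k.+1) \sum_(a' < k.+1) \sum_(b' < k.+1)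
                  q a' b' * (w a * x a ^+ a') * (w b * x b ^+ b')).
    apply: eq_bigr => a _; apply: eq_bigr => b _; rewrite /evalQ mulr_sumr.
    by apply: eq_bigr => a' _; rewrite mulr_sumr; apply: eq_bigr => b' _; ring.
  under eq_bigr => a _ do rewrite exchange_big.
  rewrite exchange_big; apply: eq_bigr => a' _.
  by under eq_bigr => a _ do rewrite exchange_big; rewrite exchange_big.
apply: eq_bigr => a' _; apply: eq_bigr => b' _.
rewrite -!exact_a -mulrA big_distrlr mulr_sumr; apply: eq_bigr => a _.
by rewrite mulr_sumr; apply: eq_bigr => b _; rewrite /=; ring.
Qed.

Lemma gauss_rule_exact_Qk : gauss_rule (gx D) (gw D) ->
  forall m, (m <= k)%N -> \sum_(i < k.+1) gw D i * gx D i ^+ m = mono_int R m.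
Proof. by case=> _ [_ exact_gw] m le_mk; apply: exact_gw; lia. Qed.

Lemma gl_rule_exact_Qk : (1 <= k)%N -> gl_rule (lx D) (lw D) ->
  forall m, (m <= k)%N -> \sum_(i < k.+1) lw D i * lx D i ^+ m = mono_int R m.
Proof. by move=> k_ge1 [_ [_ [_ [_ exact_lw]]]] m le_mk; apply: exact_lw; lia. Qed.

Lemma evalQD (q r : Qk) xi eta :
  evalQ (fun a b => q a b + r a b) xi eta = evalQ q xi eta + evalQ r xi eta.
Proof.
rewrite /evalQ -big_split; apply: eq_bigr => a _.
by rewrite -big_split; apply: eq_bigr => b _ /=; ring.
Qed.

Lemma evalQZ c (q : Qk) xi eta :
  evalQ (fun a b => c * q a b) xi eta = c * evalQ q xi eta.
Proof.
rewrite /evalQ mulr_sumr; apply: eq_bigr => a _.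
by rewrite mulr_sumr; apply: eq_bigr => b _; ring.
Qed.

Lemma cavgD (q r : Qk) : cavg (fun a b => q a b + r a b) = cavg q + cavg r.
Proof.
rewrite /cavg -mulrDl -big_split; congr (_ / _); apply: eq_bigr => a _.
by rewrite -big_split; apply: eq_bigr => b _; rewrite /= evalQD mulrDr.
Qed.

Lemma cavgZ c (q : Qk) : cavg (fun a b => c * q a b) = c * cavg q.
Proof.
rewrite /cavg mulrA mulr_sumr; congr (_ / _); apply: eq_bigr => a _.
by rewrite mulr_sumr; apply: eq_bigr => b _; rewrite evalQZ mulrCA.
Qed.

Lemma cavg_combF al be (f g : SF) i j :
  cavg (combF al f be g i j) = al * cavg (f i j) + be * cavg (g i j).
Proof. by rewrite /combF cavgD cavgZ cavgZ. Qed.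

Definition mass (f : SF) : R := \sum_(i < Nx D) \sum_(j < Ny D) cavg (f i j).

Lemma mass_combS al be (U V : State) c :
  mass (combS al U be V c) = al * mass (U c) + be * mass (V c).
Proof.
rewrite /mass !mulr_sumr -big_split; apply: eq_bigr => i _ /=.
by rewrite !mulr_sumr -big_split; apply: eq_bigr => j _; rewrite cavg_combF.
Qed.

Lemma ipG_oneF (f : SF) : ipG f oneF = dx D ^+ 2 * mass f.
Proof.
rewrite /ipG /volG /mass /cavg !mulr_sumr; apply: eq_bigr => i _.
rewrite mulr_sumr; apply: eq_bigr => j _; rewrite mulrCA mulr_suml.
apply: eq_bigr => a _; rewrite mulr_suml; apply: eq_bigr => b _.
by rewrite /evp /oneF evalQ_cstQ /=; field.
Qed.

Section Exactness.
Hypotheses (k_ge1 : (1 <= k)%N)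
  (gaussD : gauss_rule (gx D) (gw D)) (glD : gl_rule (lx D) (lw D)).

Lemma gl_gauss_cell (q : Qk) :
  \sum_(a < k.+1) \sum_(b < k.+1) lw D a * lw D b * evalQ q (lx D a) (lx D b)
  = \sum_(a < k.+1) \sum_(b < k.+1) gw D a * gw D b * evalQ q (gx D a) (gx D b).
Proof.
by rewrite (tensor_quad_exact (gl_rule_exact_Qk k_ge1 glD))
           (tensor_quad_exact (gauss_rule_exact_Qk gaussD)).
Qed.

Lemma ipGL_oneF (f : SF) : ipGL f oneF = dx D ^+ 2 * mass f.
Proof.
rewrite /ipGL /volGL /mass /cavg !mulr_sumr; apply: eq_bigr => i _.
rewrite mulr_sumr; apply: eq_bigr => j _; rewrite -gl_gauss_cell.
rewrite mulrCA mulr_suml; apply: eq_bigr => a _; rewrite mulr_suml.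
by apply: eq_bigr => b _; rewrite /evp /oneF evalQ_cstQ /=; field.
Qed.

Lemma mass_eq_ipGL (f g : SF) : 0 < dx D ->
  ipGL f oneF = ipGL g oneF -> mass f = mass g.
Proof.
move=> dx_gt0; rewrite !ipGL_oneF; apply: mulfI.
by rewrite expf_neq0 // gt_eqF.
Qed.

End Exactness.

Section Limiter.
Hypothesis gaussD : gauss_rule (gx D) (gw D).

Lemma cavg_cstQ v : cavg (cstQ v) = v.
Proof.
rewrite /cavg (tensor_quad_exact (gauss_rule_exact_Qk gaussD)) sumQ_at0.
  by rewrite /cstQ /mono_int !eqxx /=; field.
by move=> a b; rewrite /cstQ -negb_and => /negbTE->; rewrite !mul0r.
Qed.

Lemma cavg_shiftQ th (q : Qk) v : cavg (shiftQ th q v) = th * cavg q + (1 - th) * v.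
Proof. by rewrite /shiftQ cavgD cavgZ cavg_cstQ. Qed.

Lemma cavg_zs_cell S (w : 'I_4 -> Qk) c : cavg (zs_cell P S w c) = cavg (w c).
Proof.
rewrite /zs_cell; case: ifP => // _; rewrite cavg_shiftQ.
by case: eqP => [->|_]; rewrite ?cavg_shiftQ; ring.
Qed.

Lemma mass_limit S (U : State) c : mass (limit P S U c) = mass (U c).
Proof. by apply: eq_bigr => i _; apply: eq_bigr => j _; rewrite cavg_zs_cell. Qed.

Lemma cavg_shiftE (E : SF) T Es i j :
  cavg (shiftE E T Es i j)
  = cavg (E i j) + (if (i, j) \in T then Es (i, j) - cavg (E i j) else 0).
Proof.
rewrite /shiftE; case: ifP => _; last by rewrite addr0.
by rewrite cavgD cavg_cstQ.
Qed.

End Limiter.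

Lemma fluxn_oppn n1 n2 w c : fluxn P (- n1) (- n2) w c = - fluxn P n1 n2 w c.
Proof. by rewrite /fluxn; case: (nat_of_ord c) => [|[|[|?]]] /=; ring. Qed.

Lemma llf_oppn n1 n2 al win wout c :
  llf P (- n1) (- n2) al win wout c = - llf P n1 n2 al wout win c.
Proof. by rewrite /llf !fluxn_oppn; ring. Qed.

Lemma ipK_oneQ (q : Qk) : ipK q (cstQ 1) = dx D ^+ 2 * cavg q.
Proof.
rewrite /ipK /cavg mulrCA mulr_suml; apply: eq_bigr => a _.
by rewrite mulr_suml; apply: eq_bigr => b _; rewrite evalQ_cstQ; field.
Qed.

Lemma sum_rhsH_oneQ (U : State) c :
  \sum_(i < Nx D) \sum_(j < Ny D) rhsH P U c i j (cstQ 1) = 0.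
Proof.
have vol_oneQ (Fx Fy : 'I_k.+1 -> 'I_k.+1 -> R) :
  \sum_(a < k.+1) \sum_(b < k.+1) gw D a * gw D b * (dx D / 2) ^+ 2 *
    (Fx a b * (2 / dx D * dxiQ (cstQ 1) (gx D a) (gx D b))
     + Fy a b * (2 / dx D * detaQ (cstQ 1) (gx D a) (gx D b))) = 0.
  by apply: big1 => a _; apply: big1 => b _; rewrite dxiQ_cstQ detaQ_cstQ; ring.
rewrite /rhsH; under eq_bigr => i _ do under eq_bigr => j _ do rewrite vol_oneQ sub0r.
under eq_bigr => i _ do rewrite sumrN.
rewrite sumrN (_ : \sum_(i < Nx D) _ = 0) ?oppr0 //.
under eq_bigr => i _ do under eq_bigr => j _ do under eq_bigr => b _ do
  rewrite !evalQ_cstQ !mulr1.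
(* the flux leaving K^- through a face is the flux entering K^+ *)
apply: sum_periodic_faces => i j b.
  by rewrite ordSK -[1]opprK -oppr0 llf_oppn opprK oppr0.
by rewrite ordSK -[1]opprK -oppr0 llf_oppn opprK oppr0.
Qed.

Lemma mass_L (U L : State) : 0 < dx D -> isL P U L -> forall c, mass (L c) = 0.
Proof.
move=> dx_gt0 UL c; have dx2_neq0 : dx D ^+ 2 != 0 by rewrite expf_neq0 // gt_eqF.
apply: (mulfI dx2_neq0); rewrite mulr0 -(sum_rhsH_oneQ U c) /mass mulr_sumr.
by apply: eq_bigr => i _; rewrite mulr_sumr; apply: eq_bigr => j _; rewrite -UL ipK_oneQ.
Qed.

Section HyperbolicStep.
Hypotheses (gaussD : gauss_rule (gx D) (gw D)) (dx_gt0 : 0 < dx D).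

Lemma mass_ssprk tau (U V : State) : ssprk P tau U V -> forall c, mass (V c) = mass (U c).
Proof.
case=> [L0 [L1 [L2 [U1 [U2 [UL0 [-> [UL1 [-> [UL2 ->]]]]]]]]]] c.
rewrite !(mass_limit gaussD, mass_combS, mass_L dx_gt0 UL0, mass_L dx_gt0 UL1).
by rewrite (mass_L dx_gt0 UL2); field.
Qed.

Lemma mass_Hstep dt (U V : State) : Hstep P dt U V -> forall c, mass (V c) = mass (U c).
Proof.
case=> [N [taus [Us [<- [<- [_ [_ stepUs]]]]]]] c.
elim: N stepUs => // N IHN stepUs.
by rewrite (mass_ssprk (stepUs N _)) // IHN // => s /ltnW/stepUs.
Qed.

End HyperbolicStep.

Definition cstF (v : R) : SF := fun _ _ => cstQ v.

Lemma evp_cstF v p : evp (cstF v) p = v.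
Proof. exact: evalQ_cstQ. Qed.

Lemma dXp_cstF v p : dXp (cstF v) p = 0.
Proof. by rewrite /dXp dxiQ_cstQ mulr0. Qed.

Lemma dYp_cstF v p : dYp (cstF v) p = 0.
Proof. by rewrite /dYp detaQ_cstQ mulr0. Qed.

Lemma evp_combF al be (f g : SF) p : evp (combF al f be g) p = al * evp f p + be * evp g p.
Proof. by rewrite /evp /combF evalQD !evalQZ. Qed.

Lemma volGL_ext (F G : pt D -> R) : F =1 G -> volGL F = volGL G.
Proof. by move=> FG; do 4![apply: eq_bigr => ? _]; rewrite FG. Qed.

Lemma volGL_eq0 (F : pt D -> R) : (forall p, F p = 0) -> volGL F = 0.
Proof.
move=> F0; apply: big1 => i _; apply: big1 => j _; apply: big1 => a _.
by apply: big1 => b _; rewrite F0 mulr0.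
Qed.

Lemma volGLD (F G : pt D -> R) : volGL (fun p => F p + G p) = volGL F + volGL G.
Proof.
rewrite /volGL -big_split; apply: eq_bigr => i _; rewrite -big_split; apply: eq_bigr => j _.
rewrite -big_split; apply: eq_bigr => a _; rewrite -big_split; apply: eq_bigr => b _.
by rewrite mulrDr.
Qed.

Lemma volGLZ c (F : pt D -> R) : volGL (fun p => c * F p) = c * volGL F.
Proof.
rewrite /volGL mulr_sumr; apply: eq_bigr => i _; rewrite mulr_sumr; apply: eq_bigr => j _.
rewrite mulr_sumr; apply: eq_bigr => a _; rewrite mulr_sumr; apply: eq_bigr => b _.
by rewrite mulrCA.
Qed.

Lemma volGLN (F : pt D -> R) : volGL (fun p => - F p) = - volGL F.
Proof. by rewrite -mulN1r -volGLZ; apply: volGL_ext => p; rewrite mulN1r. Qed.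

Lemma facesGL_eq0 (F : R -> R -> pt D -> pt D -> R) :
  (forall n1 n2 pm pp, F n1 n2 pm pp = 0) -> facesGL F = 0.
Proof.
move=> F0; apply: big1 => i _; apply: big1 => j _; apply: big1 => b _.
by rewrite !F0 addr0 mulr0.
Qed.

Lemma facesGL_ext (F G : R -> R -> pt D -> pt D -> R) :
  (forall n1 n2 pm pp, F n1 n2 pm pp = G n1 n2 pm pp) -> facesGL F = facesGL G.
Proof.
move=> FG; apply: eq_bigr => i _; apply: eq_bigr => j _; apply: eq_bigr => b _.
by rewrite !FG.
Qed.

Local Ltac cst_forms := rewrite /epsdot /epsn /e11 /e22 /e12 /divu /dotn /avgv /avgf /vjump
  /jump /dot2 /= ?evp_cstF ?dXp_cstF ?dYp_cstF.

Lemma a_eps_cst (u : VF) v1 v2 : a_eps P u (cstF v1, cstF v2) = 0.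
Proof. by rewrite /a_eps volGL_eq0 ?facesGL_eq0 => *; cst_forms; ring. Qed.

Lemma a_lam_cst (u : VF) v1 v2 : a_lam u (cstF v1, cstF v2) = 0.
Proof. by rewrite /a_lam volGL_eq0 ?facesGL_eq0 => *; cst_forms; ring. Qed.

Lemma a_D_cst (e : SF) v : a_D P e (cstF v) = 0.
Proof. by rewrite /a_D volGL_eq0 ?facesGL_eq0 => *; cst_forms; ring. Qed.

Lemma a_eps_diag (u : VF) : a_eps P u u = b_eps P u oneF.
Proof.
rewrite /a_eps /b_eps (volGL_ext (G := epsdot u u)) => [|p]; last first.
  by rewrite evp_cstF mulr1.
rewrite [in RHS](facesGL_ext (G := fun _ _ pm pp => dot2 (vjump u pm pp) (vjump u pm pp))).
  by ring.
by move=> *; rewrite /avgf !evp_cstF; field.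
Qed.

Lemma a_lam_diag (u : VF) : a_lam u u = b_lam u oneF.
Proof.
rewrite /a_lam /b_lam (volGL_ext (G := fun p => divu u p * divu u p)); first by ring.
by move=> p; rewrite evp_cstF mulr1 expr2.
Qed.

Definition glweight (a b : 'I_k.+1) : R := lw D a * lw D b * (dx D / 2) ^+ 2.
Definition glnode i j (a b : 'I_k.+1) : pt D := Pt i j (lx D a) (lx D b).

Lemma volGL_nodal_eq (F G : pt D -> R) :
  (forall i j a b, glweight a b * F (glnode i j a b) = glweight a b * G (glnode i j a b)) ->
  volGL F = volGL G.
Proof. by move=> FG; do 4![apply: eq_bigr => ? _]; apply: FG. Qed.

Definition nodal_test i0 j0 (a0 b0 : 'I_k.+1) : SF :=
  fun i j => if (i == i0) && (j == j0) then
    fun a b : 'I_k.+1 => (lagrange_poly (lx D) a0)`_a * (lagrange_poly (lx D) b0)`_b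
  else cstQ 0.

Section Nodal.
Hypothesis lx_inj : injective (lx D).

Lemma evp_nodal_test i0 j0 a0 b0 i j a b :
  evp (nodal_test i0 j0 a0 b0) (glnode i j a b)
  = ((i == i0) && (j == j0) && (a == a0) && (b == b0))%:R.
Proof.
rewrite /evp /nodal_test /=; case: ((i == i0) && (j == j0)) => /=; last exact: evalQ_cstQ.
transitivity ((lagrange_poly (lx D) a0).[lx D a] * (lagrange_poly (lx D) b0).[lx D b]).
  rewrite !(horner_coef_wide _ (size_lagrange_poly _ _)) mulr_suml; apply: eq_bigr => a' _.
  by rewrite mulr_sumr; apply: eq_bigr => b' _; ring.
by rewrite !lagrange_poly_sample // -natrM mulnb.
Qed.

Lemma volGL_nodal_test (F : pt D -> R) i0 j0 a0 b0 :
  volGL (fun p => F p * evp (nodal_test i0 j0 a0 b0) p) = glweight a0 b0 * F (glnode i0 j0 a0 b0).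
Proof.
rewrite /volGL (big_only1 i0 (P := xpredT)) // => [|i /negbTE ni _]; last first.
  do 3![apply: big1 => ? _]; rewrite (evp_nodal_test _ _ _ _ i) ni /=; ring.
rewrite (big_only1 j0 (P := xpredT)) // => [|j /negbTE nj _]; last first.
  do 2![apply: big1 => ? _]; rewrite (evp_nodal_test _ _ _ _ i0 j) nj eqxx /=; ring.
rewrite (big_only1 a0 (P := xpredT)) // => [|a /negbTE na _]; last first.
  apply: big1 => ? _; rewrite (evp_nodal_test _ _ _ _ i0 j0 a) na !eqxx /=; ring.
rewrite (big_only1 b0 (P := xpredT)) // => [|b /negbTE nb _].
  by rewrite (evp_nodal_test _ _ _ _ i0 j0 a0 b0) !eqxx /= mulr1.
by rewrite (evp_nodal_test _ _ _ _ i0 j0 a0 b) nb !eqxx /=; ring.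
Qed.

Lemma ipGL_nodal (f r g : SF) :
  (forall chi, ipGL f chi = ipGL3 r g chi) ->
  forall i j a b, glweight a b * evp f (glnode i j a b)
                  = glweight a b * (evp r (glnode i j a b) * evp g (glnode i j a b)).
Proof.
move=> fg i j a b; have := fg (nodal_test i j a b).
by rewrite /ipGL /ipGL3 !volGL_nodal_test.
Qed.

End Nodal.

Lemma ipGL_cstF0 (f : SF) : ipGL f (cstF 0) = 0.
Proof. by apply: volGL_eq0 => p; rewrite evp_cstF mulr0. Qed.

Lemma ipGL3_cstF0 (r f : SF) : ipGL3 r f (cstF 0) = 0.
Proof. by apply: volGL_eq0 => p; rewrite evp_cstF mulr0. Qed.

Lemma ipGL3_combF (r : SF) al f be g chi :
  ipGL3 r (combF al f be g) chi = al * ipGL3 r f chi + be * ipGL3 r g chi.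
Proof.
rewrite /ipGL3 -!volGLZ -volGLD; apply: volGL_ext => p; rewrite evp_combF; ring.
Qed.

Lemma vipGL_split (m u : VF) (r : SF) :
  (forall th, vipGL m th = vipGL3 r u th) ->
  (forall chi, ipGL m.1 chi = ipGL3 r u.1 chi) /\ (forall chi, ipGL m.2 chi = ipGL3 r u.2 chi).
Proof.
move=> mu; split=> chi.
  by have := mu (chi, cstF 0); rewrite /vipGL /vipGL3 ipGL_cstF0 ipGL3_cstF0 !addr0.
by have := mu (cstF 0, chi); rewrite /vipGL /vipGL3 ipGL_cstF0 ipGL3_cstF0 !add0r.
Qed.

Lemma velocity_step_momentum (r : SF) (u0 u : VF) al be :
  (forall th, vipGL3 r u th + al * a_eps P u th + be * a_lam u th = vipGL3 r u0 th) ->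
  ipGL3 r u.1 oneF = ipGL3 r u0.1 oneF /\ ipGL3 r u.2 oneF = ipGL3 r u0.2 oneF.
Proof.
move=> uu0; split.
  have := uu0 (oneF, cstF 0).
  by rewrite a_eps_cst a_lam_cst /vipGL3 !ipGL3_cstF0 !mulr0 !addr0.
have := uu0 (cstF 0, oneF).
by rewrite a_eps_cst a_lam_cst /vipGL3 !ipGL3_cstF0 !mulr0 !addr0 !add0r.
Qed.

Definition kinetic (r : SF) (u : VF) : R :=
  volGL (fun p => evp r p * (evp u.1 p ^+ 2 + evp u.2 p ^+ 2) / 2).

Lemma kinGL_oneF (r : SF) (m u : VF) : injective (lx D) ->
  (forall th, vipGL m th = vipGL3 r u th) -> kinGL r m oneF = kinetic r u.
Proof.
move=> lx_inj /vipGL_split[mu1 mu2]; apply: volGL_nodal_eq => i j a b.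
rewrite evp_cstF !mulr1 mulrDr (kinetic_density_eq (ipGL_nodal lx_inj mu1 i j a b)).
by rewrite (kinetic_density_eq (ipGL_nodal lx_inj mu2 i j a b)); ring.
Qed.

Lemma kinetic_velocity_update (r : SF) (u0 u : VF) :
  kinetic r (combF 2 u.1 (-1) u0.1, combF 2 u.2 (-1) u0.2)
  = kinetic r u0 + 2 * (vipGL3 r u u - vipGL3 r u0 u).
Proof.
rewrite /kinetic /vipGL3 /ipGL3 -!volGLD -volGLN -!volGLD -volGLZ -!volGLD.
by apply: volGL_ext => p; rewrite /= !evp_combF; field.
Qed.

Lemma kinetic_velocity_step (r : SF) (u0 u : VF) al be :
  (forall th, vipGL3 r u th + al * a_eps P u th + be * a_lam u th = vipGL3 r u0 th) ->
  kinetic r (combF 2 u.1 (-1) u0.1, combF 2 u.2 (-1) u0.2)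
  = kinetic r u0 - 2 * al * b_eps P u oneF - 2 * be * b_lam u oneF.
Proof.
by move=> uu0; rewrite kinetic_velocity_update -(uu0 u) a_eps_diag a_lam_diag; ring.
Qed.

Lemma internal_energy_step (r e0 e : SF) (u : VF) th ga al be :
  (forall chi, ipGL3 r e chi + ga * a_D P e chi
               = ipGL3 r e0 chi + al * b_eps P u chi + be * b_lam u chi) ->
  ipGL3 r (combF (1 / th) e (1 - 1 / th) e0) oneF
  = ipGL3 r e0 oneF + al / th * b_eps P u oneF + be / th * b_lam u oneF.
Proof.
move=> ee0; have := ee0 oneF; rewrite a_D_cst mulr0 addr0 ipGL3_combF => ->.
by rewrite !mulrDr; ring.
Qed.

Lemma ord4P (c : 'I_4) : [\/ c = c0, c = c1, c = c2 | c = c3].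
Proof.
case: c => [[|[|[|[|//]]]] c_lt];
  [apply: Or41 | apply: Or42 | apply: Or43 | apply: Or44]; exact: val_inj.
Qed.

Section ParabolicStep.
Hypotheses (k_ge1 : (1 <= k)%N) (gaussD : gauss_rule (gx D) (gw D))
  (glD : gl_rule (lx D) (lw D)) (dx_gt0 : 0 < dx D) (vth_gt0 : 0 < vth P)
  (reyn_gt0 : 0 < reyn P).

Lemma mass_efix (r m1 m2 E E' : SF) :
  efix P r m1 m2 E E' -> mass E' = mass E.
Proof.
move=> [unchanged redistributed].
have [/forallP all_adm | not_all] := boolP [forall p, inGeps P (avgw r m1 m2 E p)].
  by rewrite unchanged.
have [|T [Es [[conservedT _] [_ ->]]]] := redistributed; first by move/forallP; apply/negP.
rewrite /mass.
under eq_bigr => i _ do under eq_bigr => j _ do rewrite (cavg_shiftE gaussD).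
under eq_bigr => i _ do rewrite big_split /=.
rewrite big_split /= -[RHS]addr0; congr (_ + _).
rewrite pair_bigA /=; under eq_bigr => p _ do rewrite -surjective_pairing.
rewrite -big_mkcond /= sumrB; apply/eqP; rewrite subr_eq0; apply/eqP.
move: conservedT; rewrite -!big_distrl /=; apply: mulIf.
by rewrite expf_neq0 // gt_eqF.
Qed.

Lemma Pstep_mass dt (UH UP : State) : Pstep P dt UH UP -> forall c, mass (UP c) = mass (UH c).
Proof.
case=> UHl [uH [ust [uP [mP [eH [est [eP [EP0 [EP1 [UHl_eq [mH [EH [ust_eq
  [uP_eq [est_eq [eP_eq [mP_eq [EP0_eq [fixE ->]]]]]]]]]]]]]]]]]]].
have lx_inj : injective (lx D) by case: glD.
have [mP1 mP2] := vipGL_split mP_eq; have [mH1 mH2] := vipGL_split mH.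
have [ust1 ust2] := velocity_step_momentum ust_eq.
have mass_ipGL := mass_eq_ipGL k_ge1 gaussD glD dx_gt0.
move=> c; rewrite (mass_limit gaussD) -(mass_limit gaussD (S_GL D) UH) -UHl_eq.
case: (ord4P c) => -> /=.
- by [].
- by apply: mass_ipGL; rewrite mP1 mH1 uP_eq ipGL3_combF ust1; ring.
- by apply: mass_ipGL; rewrite mP2 mH2 uP_eq ipGL3_combF ust2; ring.
rewrite (mass_efix fixE); apply: mass_ipGL.
rewrite EP0_eq EH (kinGL_oneF lx_inj mP_eq) (kinGL_oneF lx_inj mH) uP_eq.
rewrite (kinetic_velocity_step ust_eq) eP_eq (internal_energy_step _ est_eq).
by field; rewrite !gt_eqF.
Qed.

End ParabolicStep.

End Scheme.

Theorem theorem1 (R : rcfType) (D : disc R) (P : phys R) (dt : R)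
    (Un UH UP Un1 : State D) :
  (* discretisation: k >= 1, periodic uniform mesh of squares of side dx and
     diameter h, quadrature rules, 2L - 3 >= k *)
  (1 <= kd D)%N -> (0 < Nx D)%N -> (0 < Ny D)%N ->
  0 < dx D -> 0 < hd D -> hd D ^+ 2 = 2 * dx D ^+ 2 ->
  (kd D + 3 <= 2 * La D)%N ->
  gauss_rule (gx D) (gw D) -> gl_rule (lx D) (lw D) -> gl_rule (ax D) (aw D) ->
  (* parameters *)
  1 < gam P -> 0 < reyn P -> 0 < lamh P -> 0 < epsl P ->
  0 < vth P <= 1 -> 0 <= sig P -> 0 < sigt P -> 0 < dt ->
  (* one time step: (1) step (H); (2)-(4); (5) step (H) *)
  Hstep P dt Un UH ->
  Pstep P dt UH UP ->
  Hstep P dt UP Un1 ->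
  (* U_h^P(x_q) in G for all x_q in S_h *)
  (forall (i : 'I_(Nx D)) (j : 'I_(Ny D)) (q : R * R), q \in S_H D ->
      inG (Uval UP (Pt i j q.1 q.2))) ->
  (* conservation of density, momentum (componentwise) and total energy *)
  ipG (Un c0) oneF = ipG (Un1 c0) oneF /\
  (ipG (Un c1) oneF = ipG (Un1 c1) oneF /\ ipG (Un c2) oneF = ipG (Un1 c2) oneF) /\
  ipG (Un c3) oneF = ipG (Un1 c3) oneF.
Proof.
move=> k_ge1 _ _ dx_gt0 _ _ _ gaussD glD _ _ reyn_gt0 _ _ /andP[vth_gt0 _] _ _ _ HUn PUH HUP _.
have mass_step c : mass (Un1 c) = mass (Un c).
  rewrite (mass_Hstep gaussD dx_gt0 HUP) (Pstep_mass k_ge1 gaussD glD dx_gt0 vth_gt0 reyn_gt0 PUH).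
  exact: (mass_Hstep gaussD dx_gt0 HUn).
by rewrite !ipG_oneF !mass_step.
Qed.
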